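(* For every INF sentence $\varphi$ over a vocabulary $\Sigma$, the INF propagator $O_\varphi$ is a monotone propagator for the theory $\{\varphi\}$.
   Context: Vocabularies are finite sets of predicate symbols (equality is interpreted as identity). Truth values $\mathbf{t},\mathbf{f},\mathbf{u},\mathbf{i}$; inverse: $\mathbf{t}^{-1}=\mathbf{f}$, $\mathbf{f}^{-1}=\mathbf{t}$, $\mathbf{u}^{-1}=\mathbf{u}$, $\mathbf{i}^{-1}=\mathbf{i}$. Truth order $\le_t$: $\mathbf{f}\le_t\mathbf{u}\le_t\mathbf{t}$, $\mathbf{f}\le_t\mathbf{i}\le_t\mathbf{t}$ ($\mathbf{u},\mathbf{i}$ incomparable). Precision order $\le_p$: $\mathbf{u}\le_p\mathbf{t}\le_p\mathbf{i}$, $\mathbf{u}\le_p\mathbf{f}\le_p\mathbf{i}$ ($\mathbf{t},\mathbf{f}$ incomparable). A four-valued $\Sigma$-structure $\tilde I$ has domain $D$ and assigns each $P/n\in\Sigma$ a function $P^{\tilde I}:D^n\to\{\mathbf{t},\mathbf{f},\mathbf{u},\mathbf{i}\}$; two-valued structures (only $\mathbf{t},\mathbf{f}$) are identified with ordinary structures. $\tilde I\le_p\tilde J$ iff pointwise $\le_p$. The value $\tilde I\theta(\varphi)$ of a formula under variable assignment $\theta$: $\tilde I\theta(P(\overline{x}))=P^{\tilde I}(\theta(\overline{x}))$; $\tilde I\theta(\neg\varphi)=(\tilde I\theta(\varphi))^{-1}$; $\wedge$ and $\forall$ give the $\le_t$-greatest lower bound, $\vee$ and $\exists$ the $\le_t$-least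 upper bound of the values of the components (over all $d\in D$ for quantifiers). An INF sentence is a sentence $\forall\overline{x}\,(\psi\supset L[\overline{x}])$ with $\psi$ a formula whose free variables are among $\overline{x}$ and $L$ a literal $P(\overline{x})$ or $\neg P(\overline{x})$ with free variables $\overline{x}$. The INF propagator $O_\varphi$ for $\varphi=\forall\overline{x}(\psi\supset P(\overline{x}))$: $O_\varphi(\tilde I)$ agrees with $\tilde I$ except that for each tuple $\overline{d}$ with $\tilde I[\overline{x}/\overline{d}](\psi)\ge_p\mathbf{t}$, $P^{O_\varphi(\tilde I)}(\overline{d})=\mathrm{lub}_{\le_p}\{\mathbf{t},P^{\tilde I}(\overline{d})\}$; for $\varphi=\forall\overline{x}(\psi\supset\neg P(\overline{x}))$ the same with $\mathbf{f}$ in place of $\mathbf{t}$ in the lub. A propagator for $T$ is a map $O$ on four-valued $\Sigma$-structures with (i) $\tilde I\le_p O(\tilde I)$ and (ii) $O(\tilde I)\le_p M$ for every two-valued model $M$ of $T$ with $\tilde I\le_p M$; monotone means $\tilde I\le_p\tilde J\Rightarrow O(\tilde I)\le_p O(\tilde J)$. *)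

From Stdlib Require Import ClassicalDescription.
From HB Require Import structures.
From mathcomp Require Import all_boot.

Set Implicit Arguments.
Unset Strict Implicit.
Unset Printing Implicit Defensive.

Definition dec (P : Prop) : bool :=
  if excluded_middle_informative P then true else false.

Inductive tv := tT | tF | tU | tI.

Definition tv_eqb (a b : tv) : bool :=
  match a, b with
  | tT, tT | tF, tF | tU, tU | tI, tI => true
  | _, _ => false
  end.
Lemma tv_eqP : Equality.axiom tv_eqb.
Proof. by case; case; constructor. Qed.
HB.instance Definition _ := hasDecEq.Build tv tv_eqP.

Definition tv_inv (a : tv) : tv :=
  match a with tT => tF | tF => tT | tU => tU | tI => tI end.

Definition le_t (a b : tv) : bool := [|| a == b, a == tF | b == tT].
Definition le_p (a b : tv) : bool := [|| a == b, a == tU | b == tI].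

Definition meet_t (a b : tv) : tv :=
  match a, b with
  | tF, _ | _, tF => tF
  | tT, x | x, tT => x
  | tU, tU => tU
  | tI, tI => tI
  | _, _ => tF (* glb of u and i *)
  end.
Definition join_t (a b : tv) : tv :=
  match a, b with
  | tT, _ | _, tT => tT
  | tF, x | x, tF => x
  | tU, tU => tU
  | tI, tI => tI
  | _, _ => tT (* lub of u and i *)
  end.

Definition glb_t_all (D : Type) (g : D -> tv) : tv :=
  if dec (exists d, g d = tF) || (dec (exists d, g d = tU) && dec (exists d, g d = tI))
  then tF
  else if dec (exists d, g d = tU) then tU
  else if dec (exists d, g d = tI) then tI
  else tT.
Definition lub_t_all (D : Type) (g : D -> tv) : tv :=
  if dec (exists d, g d = tT) || (dec (exists d, g d = tU) && dec (exists d, g d = tI))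
  then tT
  else if dec (exists d, g d = tU) then tU
  else if dec (exists d, g d = tI) then tI
  else tF.

Definition join_p (a b : tv) : tv :=
  match a, b with
  | tI, _ | _, tI => tI
  | tU, x | x, tU => x
  | tT, tT => tT
  | tF, tF => tF
  | _, _ => tI (* lub of t and f *)
  end.

Section Logic.
Variable sym : finType.
Variable arity : sym -> nat.

Inductive form : Type :=
  | FAtom (P : sym) of (arity P).-tuple nat
  | FEq of nat & nat
  | FNeg of form
  | FAnd of form & form
  | FOr of form & form
  | FForall of nat & form
  | FExists of nat & form.

Fixpoint fv (f : form) : seq nat :=
  match f with
  | FAtom _ xs => tval xs
  | FEq x y => [:: x; y]
  | FNeg g => fv g
  | FAnd g h | FOr g h => fv g ++ fv h
  | FForall x g | FExists x g => filter (fun v => v != x) (fv g)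
  end.

Definition struct (D : Type) := forall P : sym, (arity P).-tuple D -> tv.

Definition le_p_struct (D : Type) (I J : struct D) : Prop :=
  forall P e, le_p (I P e) (J P e).

Definition two_valued (D : Type) (M : struct D) : Prop :=
  forall P e, M P e = tT \/ M P e = tF.

Definition upd1 (D : Type) (th : nat -> D) (x : nat) (d : D) : nat -> D :=
  fun v => if v == x then d else th v.

(* th[xs/ds] (xs assumed duplicate-free) *)
Definition updl (D : Type) (th : nat -> D) (xs : seq nat) (ds : seq D) : nat -> D :=
  fun v => if v \in xs then nth (th v) ds (index v xs) else th v.

Fixpoint eval (D : Type) (I : struct D) (th : nat -> D) (f : form) : tv :=
  match f with
  | FAtom P xs => I P (map_tuple th xs)
  | FEq x y => if dec (th x = th y) then tT else tF
  | FNeg g => tv_inv (eval I th g)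
  | FAnd g h => meet_t (eval I th g) (eval I th h)
  | FOr g h => join_t (eval I th g) (eval I th h)
  | FForall x g => glb_t_all (fun d => eval I (upd1 th x d) g)
  | FExists x g => lub_t_all (fun d => eval I (upd1 th x d) g)
  end.

Fixpoint sat (D : Type) (M : struct D) (th : nat -> D) (f : form) : Prop :=
  match f with
  | FAtom P xs => M P (map_tuple th xs) = tT
  | FEq x y => th x = th y
  | FNeg g => ~ sat M th g
  | FAnd g h => sat M th g /\ sat M th h
  | FOr g h => sat M th g \/ sat M th h
  | FForall x g => forall d, sat M (upd1 th x d) g
  | FExists x g => exists d, sat M (upd1 th x d) g
  end.

(* INF sentences  forall xs (psi => L[xs]),  L = P(xs) (inf_pos = true)
   or L = ~P(xs) (inf_pos = false) *)
Record inf_sentence : Type := INF {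
  inf_head : sym;
  inf_pos : bool;
  inf_vars : (arity inf_head).-tuple nat;
  inf_body : form
}.

Definition is_inf (s : inf_sentence) : Prop :=
  uniq (inf_vars s) /\ {subset fv (inf_body s) <= inf_vars s}.

Definition sat_inf (D : Type) (M : struct D) (s : inf_sentence) : Prop :=
  forall (th : nat -> D) (ds : (arity (inf_head s)).-tuple D),
    let th' := updl th (inf_vars s) ds in
    sat M th' (inf_body s) ->
    (if inf_pos s then M (inf_head s) (map_tuple th' (inf_vars s)) = tT
     else ~ (M (inf_head s) (map_tuple th' (inf_vars s)) = tT)).

Definition model_of (D : Type) (M : struct D) (T : inf_sentence -> Prop) : Prop :=
  two_valued M /\ forall s, T s -> sat_inf M s.

Definition is_propagator (D : Type) (O : struct D -> struct D)
  (T : inf_sentence -> Prop) : Prop :=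
  (forall I, le_p_struct I (O I)) /\
  (forall I M, model_of M T -> le_p_struct I M -> le_p_struct (O I) M).

Definition monotone_op (D : Type) (O : struct D -> struct D) : Prop :=
  forall I J, le_p_struct I J -> le_p_struct (O I) (O J).

(* The INF propagator O_s.  The value of psi under I[xs/ds] does not
   depend on the rest of the assignment (fv psi is among xs); we
   quantify over all base assignments th. *)
Definition inf_prop (D : Type) (s : inf_sentence) (I : struct D) : struct D :=
  fun Q e =>
    if (Q == inf_head s) &&
       dec (forall th : nat -> D,
              le_p tT (eval I (updl th (inf_vars s) e) (inf_body s)))
    then join_p (if inf_pos s then tT else tF) (I Q e)
    else I Q e.

End Logic.

(* Four-valued evaluation is monotone in the precision order, and on a
   two-valued structure it is just Tarskian truth.  Hence if the body psi
   is at least t in I and I <=p M for a model M, then psi is true in M, so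
   M makes the head literal true; its value therefore dominates the value
   the propagator writes.  Monotonicity of the propagator is again the
   monotonicity of evaluation. *)
From mathcomp Require Import all_boot.
From Stdlib Require Import ClassicalDescription Classical.

Set Implicit Arguments.
Unset Strict Implicit.
Unset Printing Implicit Defensive.

Lemma decP (P : Prop) : reflect P (dec P).
Proof. by rewrite /dec; case: excluded_middle_informative => h; constructor. Qed.

Lemma dec_iff (P Q : Prop) : (P <-> Q) -> dec P = dec Q.
Proof. by move=> PQ; case: (decP P); case: (decP Q); tauto. Qed.

Definition tv_of (P : Prop) : tv := if dec P then tT else tF.

Lemma le_p_refl : reflexive le_p.
Proof. by case. Qed.

Lemma le_p_trans a b c : le_p a b -> le_p b c -> le_p a c.
Proof. by case: a; case: b; case: c. Qed.

Lemma le_p_join_p_r a b : le_p b (join_p a b).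
Proof. by case: a; case: b. Qed.

Lemma join_p_le_p a b c : le_p a c -> le_p b c -> le_p (join_p a b) c.
Proof. by case: a; case: b; case: c. Qed.

Lemma join_p_le_p2r a b b' : le_p b b' -> le_p (join_p a b) (join_p a b').
Proof. by case: a; case: b; case: b'. Qed.

Lemma tv_inv_le_p a b : le_p a b -> le_p (tv_inv a) (tv_inv b).
Proof. by case: a; case: b. Qed.

Lemma tv_invK : involutive tv_inv.
Proof. by case. Qed.

Lemma tv_inv_of (P : Prop) : tv_inv (tv_of P) = tv_of (~ P).
Proof. by rewrite /tv_of; case: (decP P); case: (decP (~ P)). Qed.

Lemma meet_t_of (P Q : Prop) : meet_t (tv_of P) (tv_of Q) = tv_of (P /\ Q).
Proof.
by rewrite /tv_of; case: (decP P); case: (decP Q); case: (decP (P /\ Q)); tauto.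
Qed.

Lemma join_t_of (P Q : Prop) : join_t (tv_of P) (tv_of Q) = tv_of (P \/ Q).
Proof.
by rewrite /tv_of; case: (decP P); case: (decP Q); case: (decP (P \/ Q)); tauto.
Qed.

Section Quantifiers.
Variable D : Type.
Implicit Types g h : D -> tv.

Lemma lub_t_all_dual g : lub_t_all g = tv_inv (glb_t_all (tv_inv \o g)).
Proof.
have inv_eq x d : (tv_inv \o g) d = tv_inv x <-> g d = x.
  by rewrite /=; split=> [/(congr1 tv_inv)|->]; rewrite ?tv_invK.
rewrite /lub_t_all /glb_t_all.
rewrite (dec_iff (P := exists d, _ = tF) (Q := exists d, g d = tT));
  last by split=> -[d /(inv_eq tT)]; exists d.
rewrite (dec_iff (P := exists d, _ = tU) (Q := exists d, g d = tU));
  last by split=> -[d /(inv_eq tU)]; exists d.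
rewrite (dec_iff (P := exists d, _ = tI) (Q := exists d, g d = tI));
  last by split=> -[d /(inv_eq tI)]; exists d.
by case: (dec _) => //; case: (dec _); case: (dec _).
Qed.

Section Monotone.
Variables g h : D -> tv.
Hypothesis gh : forall d, le_p (g d) (h d).

Lemma exists_tU_le_p : (exists d, h d = tU) -> exists d, g d = tU.
Proof. by case=> d hd; exists d; move: (gh d); rewrite hd; case: (g d). Qed.

Lemma exists_tI_le_p : (exists d, g d = tI) -> exists d, h d = tI.
Proof. by case=> d gd; exists d; move: (gh d); rewrite gd; case: (h d). Qed.

Lemma exists_tF_le_p :
  (exists d, g d = tF) -> (exists d, h d = tF) \/ (exists d, h d = tI).
Proof.
case=> d gd; move: (gh d); rewrite gd.
by case E: (h d) => // _; [left|right]; exists d.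
Qed.

Lemma exists_tF_ge_p :
  (exists d, h d = tF) -> (exists d, g d = tF) \/ (exists d, g d = tU).
Proof.
case=> d hd; move: (gh d); rewrite hd.
by case E: (g d) => // _; [left|right]; exists d.
Qed.

Lemma glb_t_all_le_p : le_p (glb_t_all g) (glb_t_all h).
Proof.
have U := exists_tU_le_p; have I := exists_tI_le_p.
have F := exists_tF_le_p; have F' := exists_tF_ge_p.
rewrite /glb_t_all.
case: (decP (exists d, g d = tF)) F; case: (decP (exists d, g d = tU)) U F';
case: (decP (exists d, g d = tI)) I; case: (decP (exists d, h d = tF));
case: (decP (exists d, h d = tU)); case: (decP (exists d, h d = tI)) => //=.
all: tauto.
Qed.

End Monotone.

Lemma lub_t_all_le_p g h :
  (forall d, le_p (g d) (h d)) -> le_p (lub_t_all g) (lub_t_all h).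
Proof.
move=> gh; rewrite !lub_t_all_dual; apply/tv_inv_le_p/glb_t_all_le_p => d.
exact/tv_inv_le_p.
Qed.

Lemma glb_t_all_of (p : D -> Prop) :
  glb_t_all (fun d => tv_of (p d)) = tv_of (forall d, p d).
Proof.
have no x : x != tT -> x != tF -> dec (exists d, tv_of (p d) = x) = false.
  move=> xT xF; apply/decP => -[d]; rewrite /tv_of.
  by case: dec => hx; [move: xT | move: xF]; rewrite -hx.
rewrite /glb_t_all (no tU) // (no tI) //= orbF {2}/tv_of.
case: (decP (exists d, tv_of (p d) = tF)) => [[d pdF]|nF];
  case: (decP (forall d, p d)) => // all_p.
- by move: pdF; rewrite /tv_of; case: (decP (p d)) => // /(_ (all_p d)).
- case: all_p => d; apply: NNPP => npd; apply: nF; exists d.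
  by rewrite /tv_of; case: (decP (p d)).
Qed.

Lemma eq_glb_t_all g h : g =1 h -> glb_t_all g = glb_t_all h.
Proof.
move=> gh; have E x : dec (exists d, g d = x) = dec (exists d, h d = x).
  by apply: dec_iff; split=> -[d]; exists d; rewrite ?gh // -gh.
by rewrite /glb_t_all !E.
Qed.

Lemma lub_t_all_of (p : D -> Prop) :
  lub_t_all (fun d => tv_of (p d)) = tv_of (exists d, p d).
Proof.
rewrite lub_t_all_dual (@eq_glb_t_all _ (fun d => tv_of (~ p d))); last first.
  by move=> d; rewrite /= tv_inv_of.
rewrite glb_t_all_of tv_inv_of /tv_of (dec_iff (Q := exists d, p d)) //.
split; last by move=> [d pd] /(_ d).
by move=> nall; apply: NNPP => nex; apply: nall => d pd; apply: nex; exists d.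
Qed.

End Quantifiers.

Section Evaluation.
Variables (sym : finType) (arity : sym -> nat) (D : Type).
Implicit Types (I J M : struct arity D) (f : form arity) (th : nat -> D).

Lemma eval_le_p I J : le_p_struct I J ->
  forall f th, le_p (eval I th f) (eval J th f).
Proof.
move=> IJ; elim=> [P xs|x y|g IH|g IHg h IHh|g IHg h IHh|x g IH|x g IH] th /=.
- exact: IJ.
- by case: dec.
- exact/tv_inv_le_p.
- by move: (IHg th) (IHh th); case: (eval I th g); case: (eval J th g);
     case: (eval I th h); case: (eval J th h).
- by move: (IHg th) (IHh th); case: (eval I th g); case: (eval J th g);
     case: (eval I th h); case: (eval J th h).
- by apply: glb_t_all_le_p => d; apply: IH.
- by apply: lub_t_all_le_p => d; apply: IH.
Qed.

Lemma eval_two_valued M : two_valued M ->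
  forall f th, eval M th f = tv_of (sat M th f).
Proof.
move=> M2; elim=> [P xs|x y|g IH|g IHg h IHh|g IHg h IHh|x g IH|x g IH] th /=.
- rewrite /tv_of; case: (decP (M P _ = tT)) => // ?.
  by case: (M2 P (map_tuple th xs)).
- by [].
- by rewrite IH tv_inv_of.
- by rewrite IHg IHh meet_t_of.
- by rewrite IHg IHh join_t_of.
- by rewrite -glb_t_all_of; apply: eq_glb_t_all => d; rewrite IH.
- rewrite -lub_t_all_of lub_t_all_dual lub_t_all_dual; congr tv_inv.
  by apply: eq_glb_t_all => d; rewrite /= IH.
Qed.

Lemma sat_of_eval_ge_p_tT I M f th : two_valued M -> le_p_struct I M ->
  le_p tT (eval I th f) -> sat M th f.
Proof.
move=> M2 IM /le_p_trans /(_ (eval_le_p IM f th)).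
by rewrite eval_two_valued // /tv_of; case: (decP (sat M th f)).
Qed.

End Evaluation.

Lemma map_updl (D : Type) (th : nat -> D) (xs : seq nat) (ds : seq D) :
  uniq xs -> size ds = size xs -> map (updl th xs ds) xs = ds.
Proof.
move=> xs_uniq sz; apply: (@eq_from_nth _ (th 0)); first by rewrite size_map.
move=> i; rewrite size_map => lt_i.
rewrite (nth_map 0) // /updl mem_nth // index_uniq //.
by apply: set_nth_default; rewrite sz.
Qed.

Section InfPropagator.
Variables (sym : finType) (arity : sym -> nat) (D : Type).
Variable s : inf_sentence arity.
Implicit Types (I J M : struct arity D).

Lemma inf_prop_inflationary I : le_p_struct I (inf_prop s I).
Proof.
move=> Q e; rewrite /inf_prop.
by case: ifP => _; [exact: le_p_join_p_r | exact: le_p_refl].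
Qed.

Lemma inf_prop_monotone : monotone_op (inf_prop (D := D) s).
Proof.
move=> I J IJ Q e; rewrite /inf_prop; case: (Q == inf_head s); last exact: IJ.
have fire_mono : dec (forall th, le_p tT (eval I (updl th (inf_vars s) e) (inf_body s)))
            -> dec (forall th, le_p tT (eval J (updl th (inf_vars s) e) (inf_body s))).
  move=> /decP fire; apply/decP => th.
  exact: le_p_trans (fire th) (eval_le_p IJ _ _).
move: fire_mono; case: (dec _); case: (dec _) => /= fire_mono.
- exact/join_p_le_p2r.
- by have := fire_mono isT.
- exact: le_p_trans (IJ Q e) (le_p_join_p_r _ _).
- exact: IJ.
Qed.

Hypothesis s_inf : is_inf s.

(* The firing condition quantifies over every assignment; any constant one
   witnesses it, which is why the domain must be inhabited. *)
Lemma inf_prop_le_p_model (d0 : D) I M : sat_inf M s -> two_valued M ->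
  le_p_struct I M -> le_p_struct (inf_prop s I) M.
Proof.
move=> M_s M2 IM Q e; rewrite /inf_prop.
case: ifP => [/andP [/eqP head_Q /decP fire] | _]; last exact: IM.
subst Q.
set th := updl (fun=> d0) (inf_vars s) e.
have body_sat : sat M th (inf_body s).
  exact: sat_of_eval_ge_p_tT M2 IM (fire (fun=> d0)).
have vars_e : map_tuple th (inf_vars s) = e.
  by apply: val_inj; rewrite /= map_updl ?size_tuple //; case: s_inf.
apply: join_p_le_p (IM _ e).
have := M_s (fun=> d0) e body_sat; rewrite -/th vars_e.
by case: (inf_pos s); case: (M2 (inf_head s) e) => ->.
Qed.

End InfPropagator.

Theorem proposition4p3 (sym : finType) (arity : sym -> nat)
  (s : inf_sentence arity) (D : Type) :
  inhabited D -> is_inf s ->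
  is_propagator (inf_prop (D := D) s) (fun s' => s' = s) /\
  monotone_op (inf_prop (D := D) s).
Proof.
move=> [d0] s_inf; split; [split|].
- exact: inf_prop_inflationary.
- move=> I M [M2 M_T] IM.
  exact: (inf_prop_le_p_model s_inf d0 (M_T s erefl) M2 IM).
- exact: inf_prop_monotone.
Qed.
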